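(* Let $X$, $Y$ be real Banach spaces, $\Omega$ a measure space, $Z:=L^2(\Omega)$, and $e:Y\to Z$ a linear continuous dense embedding. Let $f:X\to\mathbb{R}$ and $g:X\to Y$ be continuously Fréchet differentiable. Let $(x^k)$ be generated by the augmented Lagrangian algorithm described in the context, where in Step 2 the iterate $x^{k+1}$ is chosen such that $L_{\rho_k}'(x^{k+1},w^k)\to 0$ in $X^*$ as $k\to\infty$ (derivative with respect to $x$). If $\bar x$ is a (strong) limit point of $(x^k)$, then $D\|g_+(\bar x)\|_Z^2=2g'(\bar x)^*g_+(\bar x)=0$, i.e. $\bar x$ is a stationary point of $x\mapsto\|g_+(x)\|_Z^2$.
   Context: The order on $Y$ is induced by $Z$ via $e$ (pointwise a.e.). For $z\in Z$, $z_+:=\max\{z,0\}$ pointwise; $g_+(x):=(e(g(x)))_+$; $\min$ in $Z$ is pointwise; $g'(x)^*$ denotes the adjoint of $e\circ g'(x):X\to Z$ with $Z\cong Z^*$. The augmented Lagrangian is $L_\rho(x,\lambda):=f(x)+\frac{\rho}{2}\|(g(x)+\lambda/\rho)_+\|_Z^2$, whose $x$-derivative is $f'(x)+g'(x)^*(\lambda+\rho g(x))_+$. Algorithm: (S.0) Choose $(x^0,\lambda^0)\in X\times Z$, $\rho_0>0$, $w^{\max}\in Z$ with $w^{\max}\ge 0$, $\gamma>1$, $\tau\in(0,1)$; $k=0$. (S.2) Choose $w^k\in Z$ with $0\le w^k\le w^{\max}$ a.e. and compute an approximate minimizer $x^{k+1}$ of $L_{\rho_k}(\cdot,w^k)$.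 (S.3) Set $\lambda^{k+1}:=(w^k+\rho_k g(x^{k+1}))_+$. If $k=0$ or $\|\min\{-g(x^{k+1}),w^k/\rho_k\}\|_Z\le\tau\|\min\{-g(x^k),w^{k-1}/\rho_{k-1}\}\|_Z$, set $\rho_{k+1}:=\rho_k$; else $\rho_{k+1}:=\gamma\rho_k$. (S.4) $k\leftarrow k+1$, go to (S.2). The algorithm is run without stopping. *)

From HB Require Import structures.
From mathcomp Require Import all_boot all_order all_algebra.
From mathcomp Require Import all_classical all_reals all_analysis.
Set Implicit Arguments. Unset Strict Implicit. Unset Printing Implicit Defensive.
Import Order.TTheory GRing.Theory Num.Theory.
Import numFieldNormedType.Exports.
Local Open Scope classical_set_scope.
Local Open Scope ring_scope.

Section C1.
Context {R : realType} {V W : normedModType R}.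
Definition C1_Frechet (f : V -> W) : Prop :=
  (forall x, differentiable f x) /\
  (forall x (eps : R), 0 < eps ->
     \forall x' \near x, forall h : V, `|'d f x' h - 'd f x h| <= eps * `|h|).
End C1.

(* ---------- Z = L^2(Omega), elements represented by functions ---------- *)
Section L2.
Context {d : measure_display} {T : measurableType d} {R : realType}
        (mu : {measure set T -> \bar R}).

Definition L2mem (z : T -> R) : Prop :=
  measurable_fun setT z /\ mu.-integrable setT (fun t => ((z t) ^+ 2)%:E).

Definition L2ip (z1 z2 : T -> R) : R := \int[mu]_(t in setT) (z1 t * z2 t).
Definition L2norm (z : T -> R) : R := Num.sqrt (\int[mu]_(t in setT) (z t ^+ 2)).

Definition zpos (z : T -> R) : T -> R := fun t => Num.max (z t) 0.
Definition zmin (z1 z2 : T -> R) : T -> R := fun t => Num.min (z1 t) (z2 t).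

Definition ae_le (z1 z2 : T -> R) : Prop := {ae mu, forall t, z1 t <= z2 t}.

(* e : Y -> Z linear, continuous, injective (into L^2, i.e. modulo a.e.),
   with dense range *)
Definition dense_embedding {Y : normedModType R} (e : Y -> T -> R) : Prop :=
  [/\ (forall (a : R) (y1 y2 : Y), e (a *: y1 + y2) = (fun t => a * e y1 t + e y2 t)),
      (forall y, L2mem (e y)),
      (exists C : R, forall y, L2norm (e y) <= C * `|y|),
      (forall y, {ae mu, forall t, e y t = 0} -> y = 0) &
      (forall z, L2mem z -> forall eps : R, 0 < eps ->
          exists y, L2norm (fun t => e y t - z t) < eps)].

Context {X Y : normedModType R}.
Variables (f : X -> R) (g : X -> Y) (e : Y -> T -> R).

(* x-derivative of L_rho(., lam) at x applied to h:
   f'(x)h + < (lam + rho g(x))_+ , e(g'(x)h) >_Z *)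
Definition dL (rho : R) (lam : T -> R) (x h : X) : R :=
  'd f x h + L2ip (zpos (fun t => lam t + rho * e (g x) t)) (e ('d g x h)).

Definition alm_res (x : nat -> X) (w : nat -> T -> R) (rho : nat -> R) (k : nat) : R :=
  L2norm (zmin (fun t => - e (g (x k.+1)) t) (fun t => w k t / rho k)).

Definition ALM_run (x : nat -> X) (lam : nat -> T -> R) (rho : nat -> R)
    (w : nat -> T -> R) (wmax : T -> R) (gamma tau : R) : Prop :=
  L2mem (lam 0%N) /\ 0 < rho 0%N /\ L2mem wmax /\ ae_le (fun=> 0) wmax /\
  1 < gamma /\ (0 < tau /\ tau < 1) /\
  (forall k, L2mem (w k) /\ ae_le (fun=> 0) (w k) /\ ae_le (w k) wmax) /\
  (forall k, lam k.+1 = zpos (fun t => w k t + rho k * e (g (x k.+1)) t)) /\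
  (forall k, rho k.+1 =
      if (k == 0)%N || (alm_res x w rho k <= tau * alm_res x w rho k.-1)
      then rho k else gamma * rho k).

Definition dL_to_zero (x : nat -> X) (rho : nat -> R) (w : nat -> T -> R) : Prop :=
  forall eps : R, 0 < eps ->
    \forall k \near \oo, forall h : X, `|dL (rho k) (w k) (x k.+1) h| <= eps * `|h|.
End L2.

From HB Require Import structures.
From mathcomp Require Import all_boot all_order all_algebra.
From mathcomp Require Import all_classical all_reals all_analysis.
From mathcomp Require Import ring lra measurable_realfun.
Import Order.TTheory GRing.Theory Num.Theory.
Import numFieldNormedType.Exports.
Local Open Scope classical_set_scope.
Local Open Scope ring_scope.
Set Implicit Arguments. Unset Strict Implicit.

(* The map [y |-> ||(e y)_+||^2] is Frechet differentiable with derivative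
   [u |-> 2 <(e y)_+, e u>], because pointwise
   [|(a + b)_+^2 - a_+^2 - 2 a_+ b| <= b^2]; the chain rule gives the first two
   claims.  For stationarity, note that rho_k is nondecreasing.  If it converges,
   it is eventually constant (every increase multiplies it by gamma > 1), so the
   test of (S.3) eventually always succeeds and the residual
   [||min{-g(x^{k+1}), w^k/rho_k}||] decays geometrically; it dominates
   [||g_+(x^{k+1})||], hence [g_+(xbar) = 0].  Otherwise rho_k -> +oo.  The
   scaled multiplier [lambda^{k+1}/rho_k = (w^k/rho_k + g(x^{k+1}))_+] then tends
   to [g_+(xbar)] along the subsequence since w^k is bounded by wmax, while
   [rho_k <lambda^{k+1}/rho_k, g'(x^{k+1}) h> = L'_{rho_k}(x^{k+1}, w^k) h - f'(x^{k+1}) h]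
   stays bounded; dividing by rho_k gives [<g_+(xbar), g'(xbar) h> = 0]. *)

Lemma amgm_le_sqrtrM {R : rcfType} (P A B : R) : 0 <= A -> 0 <= B ->
  (forall s, 0 < s -> P <= (s * A + s^-1 * B) / 2) -> P <= Num.sqrt A * Num.sqrt B.
Proof.
move=> A0 B0 amgm; set a := Num.sqrt A; set b := Num.sqrt B.
have a0 : 0 <= a by exact: sqrtr_ge0.
have b0 : 0 <= b by exact: sqrtr_ge0.
have Aa : A = a ^+ 2 by rewrite sqr_sqrtr.
have Bb : B = b ^+ 2 by rewrite sqr_sqrtr.
apply/ler_addgt0Pr => eps eps0.
set del := eps / (a + b + 1).
have del0 : 0 < del by rewrite divr_gt0 //; lra.
have del_ab : del * (a + b) <= eps.
  by rewrite /del mulrAC ler_pdivrMr; [nra | lra].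
(* the choice [s = (b + del) / (a + del)] nearly balances the two terms *)
have := amgm ((b + del) / (a + del)) (divr_gt0 (ltr_wpDl b0 del0) (ltr_wpDl a0 del0)).
have sA : (b + del) / (a + del) * A <= (b + del) * a.
  rewrite Aa mulrAC ler_pdivrMr; last lra.
  have := mulr_ge0 (mulr_ge0 (addr_ge0 b0 (ltW del0)) a0) (ltW del0); nra.
have sB : ((b + del) / (a + del))^-1 * B <= (a + del) * b.
  rewrite Bb invf_div mulrAC ler_pdivrMr; last lra.
  have := mulr_ge0 (mulr_ge0 (addr_ge0 a0 (ltW del0)) b0) (ltW del0); nra.
lra.
Qed.

Lemma le0_of_le_small_mul {R : realFieldType} (p K : R) :
  (forall del, 0 < del -> del <= 1 -> p <= del * K) -> p <= 0.
Proof.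
move=> small; apply/ler_addgt0Pr => eps eps0; rewrite add0r.
set q := eps / (`|K| + 1).
have q0 : 0 < q by rewrite divr_gt0 // ltr_wpDl.
have qK : q * (`|K| + 1) = eps by rewrite divfK // gt_eqF // ltr_wpDl.
have del0 : 0 < Num.min 1 q by rewrite lt_min ltr01.
have delq : Num.min 1 q <= q by rewrite ge_min lexx orbT.
have del1 : Num.min 1 q <= 1 by rewrite ge_min lexx.
have := small _ del0 del1.
have := ler_norm K; have := normr_ge0 K; nra.
Qed.

Lemma sqr_maxr0_expansion {R : realDomainType} (a b : R) :
  `|Num.max (a + b) 0 ^+ 2 - Num.max a 0 ^+ 2 - 2 * Num.max a 0 * b| <= b ^+ 2.
Proof.
rewrite ler_norml; have := sqr_ge0 b.
case: (leP a 0) => ?; case: (leP (a + b) 0) => ? ?; rewrite ?expr0n /=.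
all: by apply/andP; split; nra.
Qed.

Lemma sqr_maxr0_le_minr {R : realDomainType} (a z : R) :
  0 <= z -> Num.max a 0 ^+ 2 <= Num.min (- a) z ^+ 2.
Proof.
move=> z0; case: (leP a 0) => a0; first by rewrite expr0n sqr_ge0.
by case: (leP (- a) z) => ?; [rewrite sqrrN | lra].
Qed.

Lemma sqr_maxr0_sub_le {R : realDomainType} (a b : R) :
  (Num.max a 0 - Num.max b 0) ^+ 2 <= (a - b) ^+ 2.
Proof.
case: (leP a 0) => ha; case: (leP b 0) => hb //.
- by rewrite subrr expr0n sqr_ge0.
- by have := sqr_ge0 a; nra.
- by have := sqr_ge0 b; nra.
Qed.

Section L2.
Context {d : measure_display} {T : measurableType d} {R : realType}
  (mu : {measure set T -> \bar R}).
Implicit Types (u v : T -> R).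

Local Notation L2sq u := (\int[mu]_(t in setT) (u t ^+ 2)).

Lemma integrable_EFinD u v : mu.-integrable setT (EFin \o u) ->
  mu.-integrable setT (EFin \o v) -> mu.-integrable setT (EFin \o (fun t => u t + v t)).
Proof. by move=> iu iv; apply: eq_integrable (integrableD _ iu iv). Qed.

Lemma integrable_EFinZ (a : R) u : mu.-integrable setT (EFin \o u) ->
  mu.-integrable setT (EFin \o (fun t => a * u t)).
Proof. by move=> iu; apply: eq_integrable (integrableZl _ a iu). Qed.

Lemma integrable_EFinB u v : mu.-integrable setT (EFin \o u) ->
  mu.-integrable setT (EFin \o v) -> mu.-integrable setT (EFin \o (fun t => u t - v t)).
Proof. by move=> iu iv; apply: eq_integrable (integrableB _ iu iv). Qed.

Lemma L2mem_measurable u : L2mem mu u -> measurable_fun setT u.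
Proof. by case. Qed.

Lemma L2mem_integrable u : L2mem mu u -> mu.-integrable setT (EFin \o (fun t => u t ^+ 2)).
Proof. by case. Qed.

Lemma L2mem_le u v : measurable_fun setT u -> mu.-integrable setT (EFin \o v) ->
  (forall t, u t ^+ 2 <= v t) -> L2mem mu u.
Proof.
move=> mu_ iv uv; split => //; apply: le_integrable iv => //.
  by apply/measurable_EFinP; exact: measurable_funX.
move=> t _ /=; rewrite lee_fin ger0_norm ?sqr_ge0 //.
exact: le_trans (uv t) (ler_norm _).
Qed.

Lemma integrable_L2memM u v : L2mem mu u -> L2mem mu v ->
  mu.-integrable setT (EFin \o (fun t => u t * v t)).
Proof.
move=> hu hv.
apply: le_integrable (integrable_EFinD (L2mem_integrable hu) (L2mem_integrable hv)) => //.
  apply/measurable_EFinP.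
  exact: measurable_funM (L2mem_measurable hu) (L2mem_measurable hv).
move=> t _ /=; rewrite lee_fin [leRHS]ger0_norm ?addr_ge0 ?sqr_ge0 // normrM.
rewrite -(real_normK (num_real (u t))) -(real_normK (num_real (v t))).
have := normr_ge0 (u t); have := normr_ge0 (v t); nra.
Qed.

Lemma L2memZr u (a : R) : L2mem mu u -> L2mem mu (fun t => u t * a).
Proof.
move=> hu; apply: (L2mem_le (v := fun t => a ^+ 2 * u t ^+ 2)).
- exact: measurable_funM (L2mem_measurable hu) (measurable_cst _).
- exact: integrable_EFinZ (L2mem_integrable hu).
- by move=> t; rewrite exprMn mulrC.
Qed.

Lemma L2memN u : L2mem mu u -> L2mem mu (fun t => - u t).
Proof.
move=> hu; apply: (L2mem_le _ (L2mem_integrable hu)) => [|t].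
  exact: measurable_funN (L2mem_measurable hu).
by rewrite sqrrN.
Qed.

Lemma L2memD u v : L2mem mu u -> L2mem mu v -> L2mem mu (fun t => u t + v t).
Proof.
move=> hu hv; apply: (L2mem_le (v := fun t => 2 * u t ^+ 2 + 2 * v t ^+ 2)).
- exact: measurable_funD (L2mem_measurable hu) (L2mem_measurable hv).
- exact: integrable_EFinD (integrable_EFinZ _ (L2mem_integrable hu))
                          (integrable_EFinZ _ (L2mem_integrable hv)).
- by move=> t; have := sqr_ge0 (u t - v t); nra.
Qed.

Lemma L2memB u v : L2mem mu u -> L2mem mu v -> L2mem mu (fun t => u t - v t).
Proof. by move=> hu hv; exact: L2memD hu (L2memN hv). Qed.

Lemma L2mem_zpos u : L2mem mu u -> L2mem mu (zpos u).
Proof.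
move=> hu; apply: (L2mem_le _ (L2mem_integrable hu)) => [|t].
  exact: measurable_maxr (L2mem_measurable hu) (measurable_cst _).
by rewrite /zpos; case: (leP (u t) 0) => // _; rewrite expr0n sqr_ge0.
Qed.

Lemma L2mem_zmin u v : L2mem mu u -> L2mem mu v -> L2mem mu (zmin u v).
Proof.
move=> hu hv.
apply: (L2mem_le _ (integrable_EFinD (L2mem_integrable hu) (L2mem_integrable hv))).
  exact: measurable_minr (L2mem_measurable hu) (L2mem_measurable hv).
move=> t /=; rewrite /zmin; have := sqr_ge0 (u t); have := sqr_ge0 (v t).
by case: (leP (u t) (v t)); lra.
Qed.

Lemma L2norm_ge0 u : 0 <= L2norm mu u.
Proof. exact: sqrtr_ge0. Qed.

Lemma L2normK u : L2norm mu u ^+ 2 = L2sq u.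
Proof. by rewrite sqr_sqrtr //; apply: Rintegral_ge0 => t _; exact: sqr_ge0. Qed.

Lemma eq_L2norm u v : (forall t, u t ^+ 2 = v t ^+ 2) -> L2norm mu u = L2norm mu v.
Proof. by move=> uv; congr Num.sqrt; apply: eq_Rintegral => t _; exact: uv. Qed.

Lemma eq_L2ip u1 u2 v1 v2 : (forall t, u1 t * v1 t = u2 t * v2 t) ->
  L2ip mu u1 v1 = L2ip mu u2 v2.
Proof. by move=> uv; apply: eq_Rintegral => t _; exact: uv. Qed.

Lemma L2ipZl (a : R) u v : L2mem mu u -> L2mem mu v ->
  L2ip mu (fun t => a * u t) v = a * L2ip mu u v.
Proof.
move=> hu hv; rewrite /L2ip -RintegralZl //; last exact: integrable_L2memM.
by apply: eq_Rintegral => t _; rewrite mulrA.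
Qed.

Lemma L2ip_linear u (a : R) v1 v2 : L2mem mu u -> L2mem mu v1 -> L2mem mu v2 ->
  L2ip mu u (fun t => a * v1 t + v2 t) = a * L2ip mu u v1 + L2ip mu u v2.
Proof.
move=> hu h1 h2; rewrite /L2ip -RintegralZl //; last exact: integrable_L2memM.
rewrite -RintegralD //; last exact: integrable_L2memM.
  by apply: eq_Rintegral => t _; rewrite mulrDr mulrCA mulrA.
exact/integrable_EFinZ/integrable_L2memM.
Qed.

Lemma L2normZr u (a : R) : L2mem mu u -> L2norm mu (fun t => u t * a) = L2norm mu u * `|a|.
Proof.
move=> hu; rewrite /L2norm -sqrtr_sqr -sqrtrM; last first.
  by apply: Rintegral_ge0 => t _; exact: sqr_ge0.
rewrite -RintegralZr //; last exact: L2mem_integrable.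
by congr Num.sqrt; apply: eq_Rintegral => t _; exact: exprMn.
Qed.

Lemma L2norm_le_ae u v : L2mem mu u -> L2mem mu v ->
  {ae mu, forall t, u t ^+ 2 <= v t ^+ 2} -> L2norm mu u <= L2norm mu v.
Proof.
move=> hu hv uv; rewrite ler_sqrt; last by apply: Rintegral_ge0 => t _; exact: sqr_ge0.
have mX w : L2mem mu w -> measurable_fun setT (EFin \o (fun t => w t ^+ 2)).
  by move=> hw; apply/measurable_EFinP/measurable_funX/L2mem_measurable.
apply: fine_le; [exact: integrable_fin_num (L2mem_integrable hu)
                |exact: integrable_fin_num (L2mem_integrable hv)|].
apply: ae_ge0_le_integral => //; [| exact: mX | | exact: mX |].
- by move=> t _; rewrite lee_fin sqr_ge0.
- by move=> t _; rewrite lee_fin sqr_ge0.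
- by apply: filterS uv => t uvt _; rewrite lee_fin.
Qed.

Lemma L2sqD u v : L2mem mu u -> L2mem mu v ->
  L2sq (fun t => u t + v t) = L2sq u + 2 * L2ip mu u v + L2sq v.
Proof.
move=> hu hv; rewrite /L2ip.
have iu := L2mem_integrable hu; have iv := L2mem_integrable hv.
have i2uv := integrable_EFinZ 2 (integrable_L2memM hu hv).
transitivity (\int[mu]_(t in setT) (u t ^+ 2 + (2 * (u t * v t) + v t ^+ 2))).
  by apply: eq_Rintegral => t _; ring.
rewrite RintegralD //; last exact: integrable_EFinD i2uv iv.
by rewrite RintegralD // RintegralZl ?addrA //; exact: integrable_L2memM.
Qed.

Lemma normr_L2ip_le u v : L2mem mu u -> L2mem mu v ->
  `|L2ip mu u v| <= L2norm mu u * L2norm mu v.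
Proof.
move=> hu hv; apply: amgm_le_sqrtrM; try by apply: Rintegral_ge0 => t _; exact: sqr_ge0.
move=> s s0; have iuv := integrable_L2memM hu hv.
have iu := L2mem_integrable hu; have iv := L2mem_integrable hv.
apply: le_trans (le_normr_Rintegral measurableT iuv) _.
have -> : (s * L2sq u + s^-1 * L2sq v) / 2 =
          \int[mu]_(t in setT) (s / 2 * u t ^+ 2 + s^-1 / 2 * v t ^+ 2).
  rewrite RintegralD; [|by []|exact: integrable_EFinZ _ iu|exact: integrable_EFinZ _ iv].
  by rewrite !RintegralZl //; ring.
apply: le_Rintegral => //.
- exact: integrable_norm iuv.
- exact: integrable_EFinD (integrable_EFinZ _ iu) (integrable_EFinZ _ iv).
move=> t _; rewrite normrM -(real_normK (num_real (u t))) -(real_normK (num_real (v t))).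
set a := `|u t|; set b := `|v t|.
have ss : s * s^-1 = 1 by rewrite mulfV // gt_eqF.
have : 0 <= s^-1 * (s * a - b) ^+ 2 by rewrite mulr_ge0 ?sqr_ge0 // invr_ge0 ltW.
have -> : s^-1 * (s * a - b) ^+ 2 = s * a ^+ 2 * (s * s^-1) - 2 * (s * s^-1) * a * b
  + s^-1 * b ^+ 2 by ring.
rewrite ss; lra.
Qed.

Lemma L2normD_le u v : L2mem mu u -> L2mem mu v ->
  L2norm mu (fun t => u t + v t) <= L2norm mu u + L2norm mu v.
Proof.
move=> hu hv; rewrite -(ler_pXn2r (n := 2)) // ?nnegrE ?addr_ge0 ?L2norm_ge0 //.
rewrite L2normK L2sqD // -!L2normK sqrrD.
have := ler_norm (L2ip mu u v); have := normr_L2ip_le hu hv; lra.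
Qed.

Lemma L2normB_le u v : L2mem mu u -> L2mem mu v ->
  L2norm mu (fun t => u t - v t) <= L2norm mu u + L2norm mu v.
Proof.
move=> hu hv; apply: le_trans (L2normD_le hu (L2memN hv)) _.
by rewrite (@eq_L2norm (fun t => - v t) v) // => t; rewrite sqrrN.
Qed.

Lemma normr_L2ip_perturb u u' v v' :
  L2mem mu u -> L2mem mu u' -> L2mem mu v -> L2mem mu v' ->
  `|L2ip mu u v| <= L2norm mu (fun t => u t - u' t) * L2norm mu v
                    + `|L2ip mu u' v'| + L2norm mu u' * L2norm mu (fun t => v t - v' t).
Proof.
move=> hu hu' hv hv'; have du := L2memB hu hu'; have dv := L2memB hv hv'.
have i1 := integrable_L2memM du hv; have i2 := integrable_L2memM hu' hv'.
have i3 := integrable_L2memM hu' dv; have i12 := integrable_EFinD i1 i2.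
have -> : L2ip mu u v = L2ip mu (fun t => u t - u' t) v + L2ip mu u' v'
                        + L2ip mu u' (fun t => v t - v' t).
  by rewrite /L2ip -!RintegralD //; apply: eq_Rintegral => t _; ring.
apply: le_trans (ler_normD _ _) _; rewrite lerD ?normr_L2ip_le //.
by apply: le_trans (ler_normD _ _) _; rewrite lerD2r normr_L2ip_le.
Qed.

End L2.

Section Differentiation.
Context {R : realType} {V W : normedModType R}.

Lemma continuous_of_linear_bound (f : {linear V -> W}) (K : R) :
  (forall v, `|f v| <= K * `|v|) -> continuous f.
Proof.
move=> fK; apply/bounded_linear_continuous/linear_boundedP.
exists K; split; first exact: num_real.
by move=> r Kr v; apply: le_trans (fK v) _; rewrite ler_wpM2r // ltW.
Qed.

Lemma diff_of_quadratic_remainder (f : V -> W) (df : {linear V -> W}) (x : V) (K : R) :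
  continuous df -> (forall h, `|f (h + x) - f x - df h| <= K * `|h| ^+ 2) ->
  differentiable f x /\ 'd f x = df :> (V -> W).
Proof.
move=> dfc rem.
have fx : f \o shift x = cst (f x) + df +o_ 0 id.
  apply/eqaddoP => eps eps0.
  have K1 : 0 < `|K| + 1 by rewrite ltr_wpDl.
  have q0 : 0 < eps / (`|K| + 1) by rewrite divr_gt0.
  have : \forall h \near (0 : V), `|h| < eps / (`|K| + 1).
    by apply/nbhs_norm0P; exists (eps / (`|K| + 1)).
  apply: filterS => h; rewrite ltr_pdivlMr // => hK /=.
  rewrite opprD addrA; apply: le_trans (rem h) _.
  have := ler_norm K; have := normr_ge0 h; have := normr_ge0 K; nra.
have dfE := diff_unique dfc fx.
by split => //; apply/diff_locallyP; rewrite dfE.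
Qed.

End Differentiation.

Section PositivePartSqnorm.
Context {d : measure_display} {T : measurableType d} {R : realType}
  (mu : {measure set T -> \bar R}) {Y : normedModType R} (e : Y -> T -> R) (C : R).
Hypotheses (elin : forall (a : R) (y1 y2 : Y), e (a *: y1 + y2) = (fun t => a * e y1 t + e y2 t))
  (eL2 : forall y, L2mem mu (e y)) (C0 : 0 <= C)
  (eC : forall y, L2norm mu (e y) <= C * `|y|).

Lemma embD y1 y2 t : e (y1 + y2) t = e y1 t + e y2 t.
Proof. by have := congr1 (fun z => z t) (elin 1 y1 y2); rewrite scale1r mul1r. Qed.

Lemma embB y1 y2 t : e (y1 - y2) t = e y1 t - e y2 t.
Proof.
have := congr1 (fun z => z t) (elin (-1) y2 y1).
by rewrite scaleN1r addrC /= => ->; rewrite mulN1r addrC.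
Qed.

Definition sqnorm_pos (y : Y) : R := L2norm mu (zpos (e y)) ^+ 2.

Definition dsqnorm_pos (y0 u : Y) : R := 2 * L2ip mu (zpos (e y0)) (e u).

Lemma dsqnorm_pos_is_linear y0 : linear (dsqnorm_pos y0).
Proof.
move=> a u v; rewrite /dsqnorm_pos elin L2ip_linear //; last exact: L2mem_zpos.
by rewrite /GRing.scale /=; ring.
Qed.

HB.instance Definition _ y0 :=
  GRing.isLinear.Build R Y R *:%R (dsqnorm_pos y0) (dsqnorm_pos_is_linear y0).

Lemma dsqnorm_pos_bound y0 u :
  `|dsqnorm_pos y0 u| <= 2 * L2norm mu (zpos (e y0)) * C * `|u|.
Proof.
rewrite /dsqnorm_pos normrM ger0_norm // -!mulrA ler_pM2l //.
apply: le_trans (normr_L2ip_le (L2mem_zpos (eL2 y0)) (eL2 u)) _.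
by rewrite ler_wpM2l ?L2norm_ge0.
Qed.

Lemma sqnorm_pos_remainder y0 u :
  `|sqnorm_pos (u + y0) - sqnorm_pos y0 - dsqnorm_pos y0 u| <= C ^+ 2 * `|u| ^+ 2.
Proof.
have a2 := L2mem_integrable (L2mem_zpos (eL2 y0)).
have b2 := L2mem_integrable (eL2 u).
have ab2 := L2mem_integrable (L2mem_zpos (eL2 (u + y0))).
have iab := integrable_EFinZ 2 (integrable_L2memM (L2mem_zpos (eL2 y0)) (eL2 u)).
have idiff := integrable_EFinB ab2 a2.
have irem := integrable_EFinB idiff iab.
have -> : sqnorm_pos (u + y0) - sqnorm_pos y0 - dsqnorm_pos y0 u =
    \int[mu]_(t in setT) (zpos (e (u + y0)) t ^+ 2 - zpos (e y0) t ^+ 2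
                          - 2 * (zpos (e y0) t * e u t)).
  have iab1 := integrable_L2memM (L2mem_zpos (eL2 y0)) (eL2 u).
  by rewrite /sqnorm_pos /dsqnorm_pos !L2normK /L2ip -RintegralZl // -!RintegralB.
apply: le_trans (le_normr_Rintegral measurableT irem) _.
apply: (@le_trans _ _ (L2norm mu (e u) ^+ 2)).
  rewrite L2normK; apply: le_Rintegral => //; first exact: integrable_norm irem.
  by move=> t _; rewrite /zpos embD [e u t + _]addrC mulrA; exact: sqr_maxr0_expansion.
by rewrite -exprMn lerXn2r ?nnegrE ?L2norm_ge0 ?mulr_ge0.
Qed.

Lemma sqnorm_pos_diff y0 :
  differentiable sqnorm_pos y0 /\ 'd sqnorm_pos y0 = dsqnorm_pos y0 :> (Y -> R).
Proof.
apply: (diff_of_quadratic_remainder (K := C ^+ 2)); last exact: sqnorm_pos_remainder.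
exact: continuous_of_linear_bound (dsqnorm_pos_bound y0).
Qed.

End PositivePartSqnorm.

Section Sequences.
Context {R : realType}.

Lemma keep_or_scale_gt0 (u : nat -> R) (gamma : R) : 1 < gamma -> 0 < u 0%N ->
  (forall k, u k.+1 = u k \/ u k.+1 = gamma * u k) -> forall k, 0 < u k.
Proof.
move=> gamma1 u0 step; elim=> // k IH.
by case: (step k) => -> //; rewrite mulr_gt0 // (lt_trans ltr01 gamma1).
Qed.

Lemma keep_or_scale_nondecreasing (u : nat -> R) (gamma : R) : 1 < gamma -> 0 < u 0%N ->
  (forall k, u k.+1 = u k \/ u k.+1 = gamma * u k) ->
  {homo u : n m / (n <= m)%N >-> n <= m}.
Proof.
move=> gamma1 u0 step; apply/nondecreasing_seqP => k; case: (step k) => -> //.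
by rewrite ler_peMl ?(ltW gamma1) ?(ltW (keep_or_scale_gt0 gamma1 u0 step k)).
Qed.

Lemma cvgn_keep_or_scale_stationary (u : nat -> R) (gamma : R) :
  1 < gamma -> 0 < u 0%N -> (forall k, u k.+1 = u k \/ u k.+1 = gamma * u k) ->
  cvgn u -> \forall k \near \oo, u k.+1 = u k.
Proof.
move=> gamma1 u0 step ucvg.
have u_le := nondecreasing_cvgn_le (keep_or_scale_nondecreasing gamma1 u0 step) ucvg.
have l0 : 0 < limn u := lt_le_trans u0 (u_le 0%N).
have : limn u / gamma < limn u by rewrite ltr_pdivrMr; nra.
(* near the limit, a further multiplication by [gamma] would overshoot it *)
move=> /(cvgr_gt _ ucvg); apply: filterS => k near_lim.
case: (step k) => // jump; have := u_le k.+1; rewrite jump.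
by move: near_lim; rewrite ltr_pdivrMr; nra.
Qed.

Lemma cvg0_of_eventual_contraction (u : nat -> R) (q : R) :
  0 <= q -> q < 1 -> (forall k, 0 <= u k) ->
  (\forall k \near \oo, u k.+1 <= q * u k) -> u @ \oo --> 0.
Proof.
move=> q0 q1 u0 [N _ contr].
have geo j : u (j + N)%N <= geometric (u N) q j.
  elim: j => [|j IH] /=; first by rewrite add0n expr0 mulr1.
  rewrite addSn exprS mulrCA; apply: le_trans (contr _ (leq_addl _ _)) _.
  by rewrite ler_wpM2l.
rewrite -(cvg_shiftn N).
apply: (squeeze_cvgr (f := cst 0) (h := geometric (u N) q)); last 2 first.
- exact: cvg_cst.
- by apply: cvg_geometric; rewrite ger0_norm.
by apply: nearW => j; rewrite u0 geo.
Qed.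

End Sequences.

Lemma cvg_subseq_succ {U : ptopologicalType} (x : nat -> U) (phi : nat -> nat) (l : U) :
  (forall n, (phi n < phi n.+1)%N) -> (x \o phi) @ \oo --> l ->
  exists psi : nat -> nat, psi @ \oo --> \oo /\ (fun n => x (psi n).+1) @ \oo --> l.
Proof.
move=> phi_inc xl; exists (fun n => (phi n.+1).-1).
have phi_ge n : (n <= phi n)%N.
  by elim: n => // n IH; exact: leq_ltn_trans IH (phi_inc n).
split.
  apply/cvgnyPge => A; exists A => // n /= An.
  by rewrite -ltnS prednK ?(leq_trans _ (phi_ge n.+1)) // ltnS.
have -> : (fun n => x (phi n.+1).-1.+1) = (fun n => (x \o phi) n.+1).
  by apply/funext => n /=; rewrite prednK // (leq_trans _ (phi_ge n.+1)).
by rewrite cvg_shiftS.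
Qed.

Lemma near_of_cvg {T : Type} {U : topologicalType} {F : set_system T} (f : T -> U) (l : U)
    (P : U -> Prop) :
  f @ F --> l -> (\forall y \near l, P y) -> \forall x \near F, P (f x).
Proof. by move=> fl /fl. Qed.

Lemma near_of_cvgn_infty {T : Type} {F : set_system T} (f : T -> nat) (P : nat -> Prop) :
  f @ F --> \oo -> (\forall k \near \oo, P k) -> \forall x \near F, P (f x).
Proof. by move=> foo /foo. Qed.

Section AugmentedLagrangian.
Context {d : measure_display} {T : measurableType d} {R : realType}
  {mu : {measure set T -> \bar R}} {X Y : normedModType R}.
Context {f : X -> R} {g : X -> Y} {e : Y -> T -> R} {C : R}.
Hypotheses (elin : forall (a : R) (y1 y2 : Y), e (a *: y1 + y2) = (fun t => a * e y1 t + e y2 t))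
  (eL2 : forall y, L2mem mu (e y)) (C0 : 0 <= C)
  (eC : forall y, L2norm mu (e y) <= C * `|y|).
Context {x : nat -> X} {rho : nat -> R} {w : nat -> T -> R} {wmax : T -> R} {gamma tau : R}.
Hypotheses (rho0 : 0 < rho 0%N) (gamma1 : 1 < gamma) (tau0 : 0 < tau) (tau1 : tau < 1)
  (Hw : forall k, L2mem mu (w k) /\ ae_le mu (fun=> 0) (w k) /\ ae_le mu (w k) wmax)
  (wmaxL2 : L2mem mu wmax)
  (rho_upd : forall k, rho k.+1 =
     if (k == 0)%N || (alm_res mu g e x w rho k <= tau * alm_res mu g e x w rho k.-1)
     then rho k else gamma * rho k).

Local Notation res := (alm_res mu g e x w rho).

Lemma rho_step k : rho k.+1 = rho k \/ rho k.+1 = gamma * rho k.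
Proof. by rewrite rho_upd; case: ifP; [left | right]. Qed.

Lemma rho_gt0 k : 0 < rho k.
Proof. exact: keep_or_scale_gt0 gamma1 rho0 rho_step k. Qed.

Lemma alm_res_contraction :
  (\forall k \near \oo, rho k.+1 = rho k) -> \forall k \near \oo, res k.+1 <= tau * res k.
Proof.
move=> [K _ rho_const]; exists K => // k /= Kk.
have := rho_upd k.+1; case: ifP => // _ jump; have := gamma1.
by rewrite -(ltr_pM2r (rho_gt0 k.+1)) mul1r -jump (rho_const k.+1 (leqW Kk)) ltxx.
Qed.

Lemma scaled_w_L2mem k : L2mem mu (fun t => w k t / rho k).
Proof. by case: (Hw k) => wL2 _; exact: L2memZr. Qed.

Lemma L2norm_zpos_le_alm_res k : L2norm mu (zpos (e (g (x k.+1)))) <= res k.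
Proof.
case: (Hw k) => _ [w0 _]; apply: L2norm_le_ae.
- exact: L2mem_zpos.
- exact: L2mem_zmin (L2memN (eL2 _)) (scaled_w_L2mem k).
apply: filterS w0 => t wt0; apply: sqr_maxr0_le_minr.
by rewrite divr_ge0 // ltW // rho_gt0.
Qed.

Variables (xbar : X) (psi : nat -> nat).
Hypotheses (gC1 : C1_Frechet g) (psi_oo : psi @ \oo --> \oo)
  (xpsi : (fun n => x (psi n).+1) @ \oo --> xbar).

Lemma feasible_of_cvgn_penalty : cvgn rho -> L2norm mu (zpos (e (g xbar))) = 0.
Proof.
move=> rho_cvg; have [gdiff _] := gC1.
have res0 : res @ \oo --> 0.
  apply: cvg0_of_eventual_contraction (ltW tau0) tau1 (fun k => L2norm_ge0 _ _) _.
  exact/alm_res_contraction/(cvgn_keep_or_scale_stationary gamma1 rho0 rho_step rho_cvg).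
have sq_lim : (fun n => sqnorm_pos mu e (g (x (psi n).+1))) @ \oo --> sqnorm_pos mu e (g xbar).
  have sqg_diff : differentiable (sqnorm_pos mu e \o g) xbar.
    exact: differentiable_comp (gdiff xbar) (sqnorm_pos_diff elin eL2 C0 eC _).1.
  exact: (cvg_comp _ _ xpsi (differentiable_continuous sqg_diff)).
have sq0 : (fun n => sqnorm_pos mu e (g (x (psi n).+1))) @ \oo --> 0.
  have res2 := cvgM (cvg_comp _ _ psi_oo res0) (cvg_comp _ _ psi_oo res0).
  rewrite mulr0 in res2.
  apply: (squeeze_cvgr (f := cst 0) (h := (res \o psi) \* (res \o psi)));
    [apply: nearW => n /= | exact: cvg_cst | exact: res2].
  rewrite sqr_ge0 -expr2 lerXn2r ?nnegrE ?L2norm_ge0 //; exact: L2norm_zpos_le_alm_res.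
have sq_xbar0 : sqnorm_pos mu e (g xbar) = 0.
  by apply: (cvg_unique (@Rhausdorff R) sq_lim sq0); exact: fmap_proper_filter.
by move: sq_xbar0; rewrite /sqnorm_pos; have := L2norm_ge0 mu (zpos (e (g xbar))); nra.
Qed.

(* [zpos (fun t => w k t / rho k + e (g (x k.+1)) t)] is the scaled multiplier
   [lambda^{k+1} / rho_k] of (S.3). *)
Lemma scaled_multiplier_gap k :
  L2norm mu (fun t => zpos (e (g xbar)) t - zpos (fun t => w k t / rho k + e (g (x k.+1)) t) t)
    <= C * `|g xbar - g (x k.+1)| + L2norm mu wmax / rho k.
Proof.
case: (Hw k) => wL2 [w0 wle]; have rk0 := rho_gt0 k.
have wkL2 := scaled_w_L2mem k.
apply: (@le_trans _ _ (L2norm mu (fun t => e (g xbar - g (x k.+1)) t - w k t / rho k))).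
  apply: L2norm_le_ae.
  - exact: L2memB (L2mem_zpos (eL2 _)) (L2mem_zpos (L2memD wkL2 (eL2 _))).
  - exact: L2memB (eL2 _) wkL2.
  apply: aeW => t /=; rewrite /zpos (embB elin).
  have -> : e (g xbar) t - e (g (x k.+1)) t - w k t / rho k =
            e (g xbar) t - (w k t / rho k + e (g (x k.+1)) t) by ring.
  exact: sqr_maxr0_sub_le.
apply: le_trans (L2normB_le (eL2 _) wkL2) _; apply: lerD; first exact: eC.
rewrite L2normZr // ger0_norm ?invr_ge0 ?(ltW rk0) // ler_wpM2r ?invr_ge0 ?(ltW rk0) //.
apply: L2norm_le_ae => //; apply: filterS2 w0 wle => t /= wt0 wtm.
by rewrite lerXn2r ?nnegrE // (le_trans wt0).
Qed.

Lemma rho_L2ip_scaled_multiplier k h :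
  rho k * L2ip mu (zpos (fun t => w k t / rho k + e (g (x k.+1)) t)) (e ('d g (x k.+1) h)) =
  dL mu f g e (rho k) (w k) (x k.+1) h - 'd f (x k.+1) h.
Proof.
have rk0 := rho_gt0 k.
rewrite /dL addrC addKr -L2ipZl; last 2 first.
- exact: L2mem_zpos (L2memD (scaled_w_L2mem k) (eL2 _)).
- exact: eL2.
apply: eq_L2ip => t; congr (_ * _).
rewrite /zpos maxr_pMr ?ltW // mulr0; congr Num.max.
by field; rewrite gt_eqF.
Qed.

Lemma normr_L2ip_scaled_multiplier_le k h (del : R) : 0 < del -> del <= 1 ->
  del^-1 <= rho k -> `|dL mu f g e (rho k) (w k) (x k.+1) h| <= del * `|h| ->
  `|'d f (x k.+1) h - 'd f xbar h| <= `|h| ->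
  `|L2ip mu (zpos (fun t => w k t / rho k + e (g (x k.+1)) t)) (e ('d g (x k.+1) h))|
    <= del * (2 * `|h| + `|'d f xbar h|).
Proof.
move=> del0 del1 rho_big dL_small df_near; have rk0 := rho_gt0 k.
have df_le : `|'d f (x k.+1) h| <= `|h| + `|'d f xbar h|.
  rewrite -[X in `|X|](subrK ('d f xbar h)).
  by apply: le_trans (ler_normD _ _) _; rewrite lerD2r.
set ip := L2ip mu _ _.
have -> : `|ip| = (rho k)^-1 * `|rho k * ip| by rewrite normrM gtr0_norm // mulKf ?gt_eqF.
rewrite /ip rho_L2ip_scaled_multiplier; apply: ler_pM; rewrite ?invr_ge0 ?(ltW rk0) //.
  by rewrite invf_ple ?posrE.
apply: le_trans (ler_normB _ _) _.
have : del * `|h| <= `|h| by rewrite ler_piMl.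
lra.
Qed.

Lemma stationarity_defect_le k h (del : R) : 0 < del -> del <= 1 -> del^-1 <= rho k ->
  `|g xbar - g (x k.+1)| <= del ->
  `|dL mu f g e (rho k) (w k) (x k.+1) h| <= del * `|h| ->
  `|'d f (x k.+1) h - 'd f xbar h| <= `|h| ->
  `|'d g (x k.+1) h - 'd g xbar h| <= del * `|h| ->
  `|L2ip mu (zpos (e (g xbar))) (e ('d g xbar h))| <= del *
     ((C + L2norm mu wmax) * L2norm mu (e ('d g xbar h)) + (2 * `|h| + `|'d f xbar h|)
      + (L2norm mu (zpos (e (g xbar))) + C + L2norm mu wmax) * (C * `|h|)).
Proof.
move=> del0 del1 rho_big g_near dL_small df_near dg_near.
have rk_inv : (rho k)^-1 <= del by rewrite invf_ple ?posrE ?rho_gt0.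
set u := zpos (e (g xbar)); set v := e ('d g xbar h).
set u' := zpos (fun t => w k t / rho k + e (g (x k.+1)) t); set v' := e ('d g (x k.+1) h).
set Wn := L2norm mu wmax; have W0 : 0 <= Wn := L2norm_ge0 _ _.
have hu : L2mem mu u := L2mem_zpos (eL2 _).
have hu' : L2mem mu u' := L2mem_zpos (L2memD (scaled_w_L2mem k) (eL2 _)).
have u_gap : L2norm mu (fun t => u t - u' t) <= del * (C + Wn).
  apply: le_trans (scaled_multiplier_gap k) _; rewrite -/Wn.
  have := ler_wpM2l C0 g_near; have : Wn / rho k <= Wn * del by rewrite ler_wpM2l.
  lra.
have ip' := normr_L2ip_scaled_multiplier_le del0 del1 rho_big dL_small df_near.
have v_gap : L2norm mu (fun t => v t - v' t) <= C * (del * `|h|).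
  rewrite (@eq_L2norm _ _ _ _ _ (e ('d g xbar h - 'd g (x k.+1) h))) => [|t].
    by apply: le_trans (eC _) _; rewrite ler_wpM2l // distrC.
  by rewrite (embB elin).
have u'_le : L2norm mu u' <= L2norm mu u + C + Wn.
  rewrite (@eq_L2norm _ _ _ _ _ (fun t => u t - (u t - u' t))) => [|t]; last first.
    by rewrite opprB addrC subrK.
  apply: le_trans (L2normB_le hu (L2memB hu hu')) _.
  have : del * (C + Wn) <= C + Wn by rewrite ler_piMl // addr_ge0.
  lra.
apply: le_trans (normr_L2ip_perturb hu hu' (eL2 _) (eL2 _)) _.
have := ler_pM (L2norm_ge0 _ _) (L2norm_ge0 _ _) u_gap (lexx (L2norm mu v)).
have := ler_pM (L2norm_ge0 _ _) (L2norm_ge0 _ _) u'_le v_gap.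
lra.
Qed.

Hypotheses (fC1 : C1_Frechet f) (HdL : dL_to_zero mu f g e x rho w).

Lemma stationary_of_dvgn_penalty h :
  ~ cvgn rho -> L2ip mu (zpos (e (g xbar))) (e ('d g xbar h)) = 0.
Proof.
move=> rho_dvg; have [gdiff gC] := gC1; have [_ fC] := fC1.
have rho_oo : (rho \o psi) @ \oo --> +oo.
  apply: cvg_comp psi_oo (nondecreasing_dvgn_lt _ rho_dvg).
  exact: keep_or_scale_nondecreasing gamma1 rho0 rho_step.
have g_lim : (fun n => g (x (psi n).+1)) @ \oo --> g xbar.
  exact: (cvg_comp _ _ xpsi (differentiable_continuous (gdiff xbar))).
apply/eqP; rewrite -normr_le0; apply: le0_of_le_small_mul => del del0 del1.
near \oo => n.
apply: (stationarity_defect_le (k := psi n)) => //; near: n.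
- by move/cvgryPge : rho_oo; apply.
- exact: cvgr_dist_le g_lim _ del0.
- by apply: filterS (near_of_cvgn_infty psi_oo (HdL del0)) => n; apply.
- by apply: filterS (near_of_cvg xpsi (fC xbar 1 ltr01)) => n /(_ h); rewrite mul1r.
- by apply: filterS (near_of_cvg xpsi (gC xbar del del0)) => n; apply.
Unshelve. all: by end_near.
Qed.

End AugmentedLagrangian.

Theorem theorem6p2 (R : realType) (X Y : completeNormedModType R)
  (d : measure_display) (T : measurableType d) (mu : {measure set T -> \bar R})
  (e : Y -> T -> R) (f : X -> R) (g : X -> Y)
  (x : nat -> X) (lam : nat -> T -> R) (rho : nat -> R)
  (w : nat -> T -> R) (wmax : T -> R) (gamma tau : R) (xbar : X) :
  dense_embedding mu e ->
  C1_Frechet f -> C1_Frechet g ->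
  ALM_run mu g e x lam rho w wmax gamma tau ->
  dL_to_zero mu f g e x rho w ->
  (exists phi : nat -> nat, (forall n, (phi n < phi n.+1)%N) /\
      (x \o phi) @ \oo --> xbar) ->
  let sq := fun z : X => L2norm mu (zpos (e (g z))) ^+ 2 in
  [/\ differentiable sq xbar,
      (forall h : X, 'd sq xbar h = 2 * L2ip mu (zpos (e (g xbar))) (e ('d g xbar h))) &
      (forall h : X, L2ip mu (zpos (e (g xbar))) (e ('d g xbar h)) = 0)].
Proof.
move=> [elin eL2 [C eC] _ _] fC1 gC1
  [_ [rho0 [wmaxL2 [_ [gamma1 [[tau0 tau1] [Hw [_ rho_upd]]]]]]]] HdL
  [phi [phi_inc xphi]] sq.
have eC' y : L2norm mu (e y) <= `|C| * `|y|.
  by apply: le_trans (eC y) _; rewrite ler_wpM2r ?ler_norm.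
have [gdiff _] := gC1.
have [sq_diff dsq] := sqnorm_pos_diff elin eL2 (normr_ge0 C) eC' (g xbar).
have sqE : sq = sqnorm_pos mu e \o g by [].
split => [|h|h]; first by rewrite sqE; exact: differentiable_comp.
  by rewrite sqE diff_comp //= dsq.
have [psi [psi_oo xpsi]] := cvg_subseq_succ phi_inc xphi.
have [rho_cvg|rho_dvg] := pselect (cvgn rho).
  apply/eqP; rewrite -normr_le0; apply: le_trans (normr_L2ip_le (L2mem_zpos (eL2 _)) (eL2 _)) _.
  by rewrite (feasible_of_cvgn_penalty elin eL2 (normr_ge0 C) eC' rho0 gamma1 tau0 tau1
    Hw rho_upd gC1 psi_oo xpsi rho_cvg) mul0r.
exact: (stationary_of_dvgn_penalty elin eL2 (normr_ge0 C) eC' rho0 gamma1 Hw wmaxL2 rho_upd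
  gC1 psi_oo xpsi fC1 HdL h rho_dvg).
Qed.
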